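(* Let $H(s)$ be an SSS system of order $n$, and let $H_r(s)$ be a strictly proper ZIP system of order $r<n$ such that $H-H_r$ vanishes at $2r$ points $s_1,\dots,s_{2r}\in(0,\infty)$, counted with multiplicity (i.e. $H_r$ interpolates $H$ at these points, not necessarily distinct). Then all remaining zeros of the error system $H(s)-H_r(s)$ lie in $(-\infty,0)$.
   Context: A system $H(s)=\boldsymbol c^T(s\boldsymbol I-\boldsymbol A)^{-1}\boldsymbol b$ is state-space-symmetric (SSS) if $\boldsymbol A=\boldsymbol A^T$ and $\boldsymbol c=\boldsymbol b$; systems are assumed asymptotically stable. A system $H(s)=K\frac{\prod_{i=1}^{m-1}(s-z_i)}{\prod_{j=1}^m(s-\lambda_j)}$ is a strictly proper zero-interlacing-pole (ZIP) system if $0>\lambda_1>z_1>\lambda_2>z_2>\cdots>z_{m-1}>\lambda_m$; equivalently $H(s)=\sum_{i=1}^m\frac{b_i}{s-\lambda_i}$ with distinct $\lambda_i<0$ and all $b_i>0$. *)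

(* Scalars: C : numClosedFieldType (e.g. algC), so that
   "zeros" of the error system range over all complex numbers. *)
From HB Require Import structures.
From mathcomp Require Import all_boot all_order all_algebra.
Set Implicit Arguments. Unset Strict Implicit. Unset Printing Implicit Defensive.
Import Order.TTheory GRing.Theory Num.Theory.
Local Open Scope ring_scope.

Section Defs.
Variable C : numClosedFieldType.

(* State-space-symmetric, asymptotically stable, real system of state
   dimension n: A = A^T, c = b, real data, all eigenvalues with Re < 0. *)
Definition SSS (n : nat) (A : 'M[C]_n) (b : 'cV[C]_n) : Prop :=
  [/\ A^T = A, A \is a mxOver Num.real, b \is a mxOver Num.real &
      forall z : C, root (char_poly A) z -> 'Re z < 0].

(* "order n": the realization (A,b,b^T) is minimal, i.e. (for an SSS system)
   controllable: the Krylov matrix [b^T; b^T A; ...; b^T A^(n-1)] has full rank. *)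
Definition minimal_SSS (n : nat) (A : 'M[C]_n) (b : 'cV[C]_n) : bool :=
  row_free (\matrix_(i < n) (b^T *m A ^+ i)).

(* H(s) = b^T (sI - A)^{-1} b = numH / char_poly A. *)
Definition numH (n : nat) (A : 'M[C]_n) (b : 'cV[C]_n) : {poly C} :=
  ((map_mx polyC b)^T *m \adj (char_poly_mx A) *m map_mx polyC b) 0 0.

(* Strictly proper ZIP system of order r:
   H_r(s) = sum_i bb_i / (s - lam_i), lam_i < 0 distinct, bb_i > 0. *)
Definition ZIP (r : nat) (lam bb : 'I_r -> C) : Prop :=
  [/\ injective lam, forall i, lam i < 0 & forall i, 0 < bb i].

Definition denHr (r : nat) (lam : 'I_r -> C) : {poly C} :=
  \prod_(i < r) ('X - (lam i)%:P).

Definition numHr (r : nat) (lam bb : 'I_r -> C) : {poly C} :=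
  \sum_(i < r) bb i *: \prod_(j < r | j != i) ('X - (lam j)%:P).

(* Numerator of the error system H - H_r over the common denominator
   char_poly A * denHr lam. *)
Definition err_num (n r : nat) (A : 'M[C]_n) (b : 'cV[C]_n)
    (lam bb : 'I_r -> C) : {poly C} :=
  numH A b * denHr lam - numHr lam bb * char_poly A.

End Defs.

(* Both H and H_r are sums of simple fractions w / (s - p) with negative real
   poles p and real weights w.  Diagonalising the real symmetric matrix A by
   an orthogonal matrix gives the modal form H(s) = sum_i |v_i|^2 / (s - d_i),
   and H_r(s) = sum_j bb_j / (s - lam_j); so the numerator err_num of H - H_r
   is the numerator pf_num l of a list l of (pole, weight) pairs in which at
   most r weights (the -bb_j) are negative.

   The core fact (pf_num_split) is that such a numerator splits as T * R,
   where T has only negative roots and deg R <= 2N for N negative weights.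
   For sorted distinct poles with nonzero weights, two consecutive poles
   carrying weights of the same sign enclose a real root of the numerator
   (intermediate value theorem for polynomials with real coefficients,
   real_poly_ivt), and at most 2N consecutive pairs have weights of opposite
   signs; coincident poles and zero weights are first merged or removed, each
   contributing a factor X - p with p < 0.

   Finally the 2r interpolation points are positive, so their product S is
   coprime to T and divides R; as deg R <= 2r = deg S, the quotient of
   err_num by S is a nonzero constant multiple of T (neg_root_split_quotient).  Minimality of the
   realisation and r < n guarantee that err_num is not zero. *)

From HB Require Import structures.
From mathcomp Require Import all_boot all_order all_algebra.
From mathcomp Require Import ring zify.
Import Order.TTheory GRing.Theory Num.Theory.
Local Open Scope ring_scope.
Set Implicit Arguments. Unset Strict Implicit. Unset Printing Implicit Defensive.

(* A list l of (pole, weight) pairs stands for sum_(x <- l) x.2 / (s - x.1). *)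
Section PartialFractions.
Variable C : numClosedFieldType.
Implicit Types l : seq (C * C).
Local Notation cj := (map_poly (@Num.conj C)).

Definition pf_den l : {poly C} := \prod_(x <- l) ('X - x.1%:P).

Fixpoint pf_num l : {poly C} :=
  if l is x :: l' then x.2 *: pf_den l' + ('X - x.1%:P) * pf_num l' else 0.

Lemma pf_den_rem x l : x \in l -> pf_den l = ('X - x.1%:P) * pf_den (rem x l).
Proof. by move=> xl; rewrite /pf_den (big_rem _ xl). Qed.

Lemma pf_den_perm l1 l2 : perm_eq l1 l2 -> pf_den l1 = pf_den l2.
Proof. by move=> h; rewrite /pf_den (perm_big _ h). Qed.

Lemma pf_num_rem x l : x \in l ->
  pf_num l = x.2 *: pf_den (rem x l) + ('X - x.1%:P) * pf_num (rem x l).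
Proof.
elim: l => //= y l IH; rewrite inE; case: (eqVneq y x) => [-> //|nyx] /= xl.
rewrite (IH xl) (pf_den_rem xl) /pf_den big_cons -!mul_polyC; ring.
Qed.

Lemma pf_num_perm l1 l2 : perm_eq l1 l2 -> pf_num l1 = pf_num l2.
Proof.
elim: l1 l2 => [|x l1 IH] l2 /=; first by rewrite perm_sym => /perm_nilP ->.
move=> h; have xl2 : x \in l2 by rewrite -(perm_mem h) mem_head.
have h' : perm_eq l1 (rem x l2).
  by rewrite -(perm_cons x); apply: perm_trans h (perm_to_rem xl2).
by rewrite (pf_num_rem xl2) (IH _ h') (pf_den_perm h').
Qed.

Lemma pf_num_cat l1 l2 :
  pf_num (l1 ++ l2) = pf_num l1 * pf_den l2 + pf_den l1 * pf_num l2.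
Proof.
elim: l1 => [|x l1 IH] /=; first by rewrite /pf_den big_nil mul0r add0r mul1r.
by rewrite IH /pf_den big_cat /= big_cons -!mul_polyC; ring.
Qed.

Lemma size_pf_num l : (size (pf_num l) <= size l)%N.
Proof.
elim: l => [|x l IH] /=; first by rewrite size_poly0.
apply: leq_trans (size_polyD _ _) _; rewrite geq_max; apply/andP; split.
  by apply: leq_trans (size_scale_leq _ _) _; rewrite size_prod_XsubC.
by apply: leq_trans (size_polyMleq _ _) _; rewrite size_XsubC.
Qed.

Lemma pf_num_map (I : eqType) (f : I -> C * C) (s : seq I) : uniq s ->
  pf_num (map f s) = \sum_(i <- s) (f i).2 *: \prod_(j <- s | j != i) ('X - (f j).1%:P).
Proof.
elim: s => [|x s IH] /=; first by rewrite big_nil.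
case/andP=> xs us; rewrite big_cons IH // mulr_sumr /pf_den big_map.
have all_neq_x : \prod_(j <- s | j != x) ('X - (f j).1%:P) = \prod_(j <- s) ('X - (f j).1%:P).
  rewrite big_seq_cond [RHS]big_seq; apply: eq_bigl => j.
  by case: (boolP (j \in s)) => //= js; apply: contraNneq xs => <-.
rewrite big_cons eqxx /= all_neq_x; congr (_ + _); apply: eq_big_seq => i is_.
have xi : (x != i) by apply: contraNneq xs => ->.
by rewrite big_cons xi scalerAr.
Qed.

Lemma pf_num_enum (I : finType) (f : I -> C * C) :
  pf_num [seq f i | i <- enum I] =
    \sum_i (f i).2 *: \prod_(j | j != i) ('X - (f j).1%:P).
Proof.
rewrite pf_num_map ?enum_uniq // big_enum; apply: eq_bigr => i _.
by rewrite big_enum_cond.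
Qed.

Lemma pf_den_enum (I : finType) (f : I -> C * C) :
  pf_den [seq f i | i <- enum I] = \prod_i ('X - (f i).1%:P).
Proof. by rewrite /pf_den big_map big_enum. Qed.

(* At a pole only the fraction of that pole contributes to the numerator. *)
Lemma horner_pf_num_pole (I : finType) (f : I -> C * C) k :
  (pf_num [seq f i | i <- enum I]).[(f k).1] =
    (f k).2 * \prod_(j | j != k) ((f k).1 - (f j).1).
Proof.
rewrite pf_num_enum horner_sum (bigD1 k) //= [X in _ + X]big1 => [|i ik].
  by rewrite addr0 hornerZ horner_prod; under eq_bigr do rewrite hornerXsubC.
by rewrite hornerZ horner_prod (bigD1 k) 1?eq_sym //= hornerXsubC subrr mul0r mulr0.
Qed.

Lemma pf_den_real l : all (fun x => x.1 \is Num.real) l -> cj (pf_den l) = pf_den l.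
Proof.
move=> al; rewrite /pf_den rmorph_prod; apply: eq_big_seq => y yl.
by rewrite /= map_polyXsubC /= (CrealP (allP al y yl)).
Qed.

Lemma pf_num_real l : all (fun x => (x.1 \is Num.real) && (x.2 \is Num.real)) l ->
  cj (pf_num l) = pf_num l.
Proof.
elim: l => [|x l IH] /=; first by rewrite rmorph0.
case/andP=> /andP[r1 r2] al.
rewrite rmorphD rmorphM /= map_polyZ map_polyXsubC /= IH // pf_den_real.
  by rewrite (CrealP r1) (CrealP r2).
by apply/allP => y /(allP al) /andP[].
Qed.

Lemma pf_num_simple_pole_neq0 l x :
  x \in l -> x.2 != 0 -> count (fun y : C * C => y.1 == x.1) l = 1%N -> pf_num l != 0.
Proof.
move=> xl x20 simple; apply/negP => /eqP pf0.
have no_other : count (fun y : C * C => y.1 == x.1) (rem x l) = 0%N.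
  by move: simple; rewrite ((permP (perm_to_rem xl)) _) /= eqxx => -[].
have := congr1 (horner^~ x.1) pf0; rewrite (pf_num_rem xl) hornerD hornerZ hornerM.
rewrite hornerXsubC subrr mul0r addr0 horner0 /pf_den horner_prod => /eqP.
rewrite mulf_eq0 (negPf x20) /=; apply/negP; rewrite prodf_seq_neq0.
apply/allP => y yl; rewrite hornerXsubC subr_eq0 eq_sym; apply/negP => yx.
have : has (fun y : C * C => y.1 == x.1) (rem x l) by apply/hasP; exists y.
by rewrite has_count no_other.
Qed.

End PartialFractions.

(* Real polynomials are represented inside C as the fixed points of the
   coefficientwise complex conjugation cj. *)
Section RealPolynomials.
Variable C : numClosedFieldType.
Local Notation cj := (map_poly (@Num.conj C)).

Lemma conj_pair_gt0 (z x : C) : z \isn't Num.real -> x \is Num.real ->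
  0 < (('X - (z^*)%:P) * ('X - z%:P)).[x].
Proof.
move=> zr xr; rewrite hornerM !hornerXsubC.
have -> : x - z^* = (x - z)^* by rewrite rmorphB /= (CrealP xr).
by rewrite mulrC mul_conjC_gt0 subr_eq0; apply: contraNneq zr => <-.
Qed.

Lemma conj_fixed_const_sqr (F : {poly C}) (a b : C) : cj F = F ->
  (size F <= 1)%N -> 0 <= F.[a] * F.[b].
Proof.
move=> cF /size1_polyC eF; move: cF; rewrite eF map_polyC /= => /polyC_inj cF.
by rewrite !hornerC -{2}cF mul_conjC_ge0.
Qed.

Lemma sign_change_cofactor (F G q : {poly C}) (a b : C) :
  F = G * q -> cj F = F -> cj q = q -> q \is monic -> (1 < size q)%N ->
  0 < q.[a] * q.[b] -> F.[a] * F.[b] < 0 ->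
  [/\ cj G = G, (size G < size F)%N & G.[a] * G.[b] < 0].
Proof.
move=> FGq cF cq mq sq qab Fab.
have F0 : F != 0 by apply: contraTneq Fab => ->; rewrite horner0 mul0r ltxx.
have G0 : G != 0 by apply: contraNneq F0 => G0; rewrite FGq G0 mul0r.
split.
- by apply: (mulIf (monic_neq0 mq)); rewrite -{1}cq -rmorphM /= -FGq cF.
- by rewrite FGq size_Mmonic //; move: sq; case: (size q) => // m; lia.
- by move: Fab; rewrite FGq !hornerM mulrACA (pmulr_llt0 _ qab).
Qed.

(* Intermediate value theorem for real polynomials: peel off real roots
   outside [a, b] and pairs of conjugate roots until a root in (a, b) shows. *)
Lemma real_poly_ivt (F : {poly C}) (a b : C) : cj F = F ->
  a \is Num.real -> b \is Num.real -> a < b -> F.[a] * F.[b] < 0 ->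
  exists2 z, a < z < b & root F z.
Proof.
move=> + ra rb ab; have [k ltFk] := ubnP (size F).
elim: k F ltFk => // k IH F ltFk cF Fab.
have [sF|sF] := leqP (size F) 1.
  by have := lt_le_trans Fab (conj_fixed_const_sqr a b cF sF); rewrite ltxx.
have [z rz] : exists z, root F z by apply/closed_rootP; rewrite neq_ltn sF orbT.
have recurse q : q %| F -> cj q = q -> q \is monic -> (1 < size q)%N ->
    0 < q.[a] * q.[b] -> exists2 z, a < z < b & root F z.
  move=> /divpK/esym FGq cq mq sq qab; set G := (F %/ q)%R in FGq.
  have [cG sG Gab] := sign_change_cofactor FGq cF cq mq sq qab Fab.
  have ltGk : (size G < k)%N by rewrite -ltnS; apply: leq_trans ltFk.
  have [y yab rG] := IH _ ltGk cG Gab.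
  by exists y => //; rewrite FGq rootM rG.
have [zr|zr] := boolP (z \is Num.real).
  have [zab|zab] := boolP (a < z < b); first by exists z.
  apply: (recurse ('X - z%:P)).
  - by rewrite dvdp_XsubCl.
  - by rewrite map_polyXsubC /= (CrealP zr).
  - exact: monicXsubC.
  - by rewrite size_XsubC.
  have za : z != a by apply: contraTneq Fab => <-; rewrite (eqP rz) mul0r ltxx.
  have zb : z != b by apply: contraTneq Fab => <-; rewrite (eqP rz) mulr0 ltxx.
  rewrite !hornerXsubC; move: zab; rewrite negb_and -!real_leNgt // => /orP[zla|bz].
    by rewrite mulr_gt0 // subr_gt0 // ?(lt_trans _ ab) // lt_neqAle za zla.
  by rewrite nmulr_rgt0 ?subr_lt0 // ?(lt_trans ab) // lt_neqAle eq_sym zb bz.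
have zcz : z^* != z by apply: contraNneq zr => /CrealP.
have rzc : root F z^* by rewrite /root -cF horner_map (eqP rz) rmorph0.
apply: (recurse (('X - (z^*)%:P) * ('X - z%:P))).
- rewrite Gauss_dvdp ?coprimep_XsubC ?root_XsubC 1?eq_sym //.
  by rewrite !dvdp_XsubCl rz rzc.
- by rewrite rmorphM /= !map_polyXsubC /= conjCK mulrC.
- by rewrite monicMl monicXsubC.
- by rewrite size_Mmonic ?monic_neq0 ?monicXsubC // !size_XsubC.
- by rewrite mulr_gt0 ?conj_pair_gt0.
Qed.

End RealPolynomials.

Section NegRootSplit.
Variable C : numClosedFieldType.

Definition neg_root_split (F : {poly C}) (N : nat) : Prop :=
  exists T R : {poly C},
    [/\ F = T * R, forall z, root T z -> z < 0 & (size R <= 2 * N + 1)%N].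

Lemma neg_root_split_mulX (a : C) (F : {poly C}) (N N' : nat) :
  a < 0 -> (N <= N')%N -> neg_root_split F N -> neg_root_split (('X - a%:P) * F) N'.
Proof.
move=> a0 NN' [T [R [FTR rT sR]]]; exists (('X - a%:P) * T), R; split.
- by rewrite FTR mulrA.
- by move=> z; rewrite rootM root_XsubC => /orP[/eqP -> //|/rT].
- by apply: leq_trans sR _; rewrite leq_add2r leq_mul2l NN' orbT.
Qed.

Lemma neg_root_split_quotient (F S : {poly C}) (N : nat) :
  neg_root_split F N -> F != 0 -> S %| F -> (2 * N + 1 <= size S)%N ->
  (forall z, root S z -> 0 <= z) ->
  exists Q, F = S * Q /\ (forall z, root Q z -> z < 0).
Proof.
move=> [T [R [FTR rT sR]]] F0 SF sS rS.
have cST : coprimep S T.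
  apply: Pdiv.ClosedField.root_coprimep => z /rS z0; apply/negP => /rT zn.
  by have := lt_le_trans zn z0; rewrite ltxx.
have [q Rq] : exists q, R = q * S by apply/dvdpP; rewrite -(Gauss_dvdpr _ cST) -FTR.
have R0 : R != 0 by apply: contraNneq F0 => R0; rewrite FTR R0 mulr0.
have [q0 S0] : q != 0 /\ S != 0 by apply/andP; rewrite -negb_or -mulf_eq0 -Rq.
have sq : (size q <= 1)%N.
  by move: sR sS; rewrite Rq size_mul //; set a := size q; set c := size S; lia.
exists (T * (q`_0)%:P); split; first by rewrite FTR Rq {1}(size1_polyC sq); ring.
move=> z; rewrite rootM rootC => /orP[/rT //|q00].
by move: q0; rewrite (size1_polyC sq) polyC_eq0 q00.
Qed.

End NegRootSplit.

Section DistinctPoles.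
Variable C : numClosedFieldType.
Variables (m : nat) (p w : nat -> C).
Hypothesis p_incr : forall i j, (i < j < m)%N -> p i < p j.
Hypothesis p_neg : forall k, (k < m)%N -> p k < 0.
Hypothesis w_real : forall k, (k < m)%N -> w k \is Num.real.
Hypothesis w_neq0 : forall k, (k < m)%N -> w k != 0.

Let F := pf_num [seq (p i, w i) | i : 'I_m <- enum 'I_m].
Let same_sign k := 0 < w k * w k.+1.

Lemma horner_F_pole (k : 'I_m) : F.[p k] = w k * \prod_(j < m | j != k) (p k - p j).
Proof. exact: (horner_pf_num_pole (fun i : 'I_m => (p i, w i))). Qed.

Lemma outer_pole_gt0 k j : (k.+1 < m)%N -> (j < m)%N -> j != k -> j != k.+1 ->
  0 < (p k - p j) * (p k.+1 - p j).
Proof.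
move=> km jm jk jk1; case: (ltngtP j k) jk => // [jltk|kltj] _.
  by rewrite mulr_gt0 // subr_gt0 p_incr ?jltk ?(ltn_trans jltk) //= ltnW.
have k1ltj : (k.+1 < j)%N by rewrite ltn_neqAle eq_sym jk1 kltj.
by rewrite nmulr_rgt0 ?subr_lt0 ?p_incr ?kltj ?k1ltj ?jm // ltnW.
Qed.

(* Weights of equal sign at consecutive poles force a root between them,
   since the numerator takes opposite signs at these poles. *)
Lemma same_sign_root k : (k.+1 < m)%N -> same_sign k ->
  exists2 z, p k < z < p k.+1 & root F z.
Proof.
move=> k1m sk; have km : (k < m)%N by apply: ltnW.
have preal i : (i < m)%N -> p i \is Num.real by move=> im; rewrite ltr0_real ?p_neg.
apply: real_poly_ivt; rewrite ?preal ?p_incr ?leqnn //.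
  by apply: pf_num_real; apply/allP => _ /mapP[i _ ->]; rewrite /= preal ?w_real.
have := horner_F_pole (Ordinal km); have := horner_F_pole (Ordinal k1m); move=> /= -> ->.
set i0 := Ordinal km; set i1 := Ordinal k1m.
have i10 : i1 != i0 by rewrite -val_eqE /= (gtn_eqF (ltnSn k)).
rewrite (bigD1 i1) //= [\prod_(j < m | j != i1) _](bigD1 i0) 1?eq_sym //=.
rewrite [\prod_(j < m | (j != i1) && (j != i0)) _](eq_bigl (fun j => (j != i0) && (j != i1))).
  2: by move=> j; rewrite andbC.
have -> : w k * ((p k - p k.+1) * \prod_(j | (j != i0) && (j != i1)) (p k - p j)) *
    (w k.+1 * ((p k.+1 - p k) * \prod_(j | (j != i0) && (j != i1)) (p k.+1 - p j)))
    = (w k * w k.+1) * ((p k - p k.+1) * (p k.+1 - p k)) *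
      \prod_(j | (j != i0) && (j != i1)) ((p k - p j) * (p k.+1 - p j)).
  by rewrite big_split /=; ring.
rewrite pmulr_llt0; last first.
  apply: prodr_gt0 => j /andP[]; rewrite -!val_eqE /=.
  exact: outer_pole_gt0.
by rewrite pmulr_rlt0 // nmulr_rlt0 ?subr_lt0 ?subr_gt0 ?p_incr ?leqnn.
Qed.

Lemma roots_below t : (t < m)%N -> exists zs : seq C,
  [/\ uniq zs, all (root F) zs, all (fun z => z < p t) zs &
      size zs = count same_sign (iota 0 t)].
Proof.
elim: t => [|t IH] tm; first by exists [::].
have [zs [u r lt sz]] := IH (ltnW tm).
have below_next : all (fun z => z < p t.+1) zs.
  by apply/allP => y /(allP lt) yt; apply: lt_trans yt (p_incr _); rewrite ltnSn.
rewrite -[in iota _ _]addn1 iotaD count_cat /= addn0 add0n.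
have [st|nst] := boolP (same_sign t); last by exists zs; split => //; rewrite sz addn0.
have [z /andP[z1 z2] rz] := same_sign_root tm st.
exists (z :: zs); split => /=; rewrite ?rz ?z2 ?sz ?addn1 //.
by rewrite u andbT; apply/negP => /(allP lt) zt; move: (lt_trans zt z1); rewrite ltxx.
Qed.

(* Each pair with opposite signs involves a negative weight, and each
   weight belongs to at most two consecutive pairs. *)
Lemma same_sign_count : (0 < m)%N ->
  (m.-1 <= count same_sign (iota 0 m.-1) + 2 * count (fun k => (w k < 0)%R) (iota 0 m))%N.
Proof.
move=> m0; set neg := fun k => w k < 0.
have change_neg : (count (predC same_sign) (iota 0 m.-1) <=
    count neg (iota 0 m.-1) + count (neg \o succn) (iota 0 m.-1))%N.
  rewrite -count_predUI (eq_in_count (a2 := fun k => ~~ same_sign k && (neg k || neg k.+1))).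
    by apply: leq_trans (sub_count _ _) (leq_addr _ _) => k /andP[].
  move=> k; rewrite mem_iota add0n /= => km; have k1 : (k.+1 < m)%N by rewrite -(prednK m0).
  have [r0 r1] := (w_real (ltnW k1), w_real k1).
  apply/idP/andP => [/negP ns|[] //]; split; first exact/negP.
  apply/negPn/norP => -[n0 n1]; apply: ns.
  by rewrite /same_sign mulr_gt0 // lt_def w_neq0 ?real_leNgt ?real0 // ltnW.
have neg_init : (count neg (iota 0 m.-1) <= count neg (iota 0 m))%N.
  by rewrite -{2}(prednK m0) -addn1 iotaD count_cat leq_addr.
have neg_tail : (count (neg \o succn) (iota 0 m.-1) <= count neg (iota 0 m))%N.
  have shift : iota 1 m.-1 = map succn (iota 0 m.-1) by rewrite -(iotaDl 1).
  by rewrite -{2}(prednK m0) /= shift count_map leq_addl.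
have := count_predC same_sign (iota 0 m.-1); rewrite size_iota; lia.
Qed.

(* The numerator has at least m - 1 - 2N negative roots and degree < m. *)
Lemma distinct_poles_split :
  neg_root_split F (count (fun k => (w k < 0)%R) (iota 0 m)).
Proof.
have [m0|m_gt0] := posnP m.
  exists 1, 0; rewrite size_poly0 mulr0; split => // [|z]; last by rewrite (negPf (root1 z)).
  by rewrite /F; have -> : enum 'I_m = [::] by apply: size0nil; rewrite size_enum_ord.
have mm : (m.-1 < m)%N by rewrite ltn_predL.
have [zs [u r lt sz]] := roots_below mm.
have [q Fq] := uniq_roots_prod_XsubC r (etrans (uniq_rootsE zs) u).
exists (\prod_(z <- zs) ('X - z%:P)), q; split; first by rewrite Fq mulrC.
  by move=> z; rewrite root_prod_XsubC => /(allP lt) /lt_trans; apply; apply: p_neg.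
have [->|q0] := eqVneq q 0; first by rewrite size_poly0.
have sF : (size F <= m)%N.
  by apply: leq_trans (size_pf_num _) _; rewrite size_map size_enum_ord.
move: sF (same_sign_count m_gt0); rewrite Fq size_Mmonic ?monic_prod_XsubC //.
rewrite size_prod_XsubC sz; lia.
Qed.

End DistinctPoles.

Section Reduction.
Variable C : numClosedFieldType.
Implicit Types l : seq (C * C).

Definition neg_weights l : nat := count (fun x : C * C => (x.2 < 0)%R) l.

Lemma pf_num_zero_weight x l : x \in l -> x.2 = 0 ->
  pf_num l = ('X - x.1%:P) * pf_num (rem x l).
Proof. by move=> xl x20; rewrite (pf_num_rem xl) x20 scale0r add0r. Qed.

Lemma pf_num_merge x y l : x \in l -> y \in rem x l -> y.1 = x.1 ->
  pf_num l = ('X - x.1%:P) * pf_num ((x.1, x.2 + y.2) :: rem y (rem x l)).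
Proof.
move=> xl yl yx; rewrite (pf_num_rem xl) (pf_num_rem yl) (pf_den_rem yl) /= yx.
by rewrite -!mul_polyC polyCD; ring.
Qed.

Lemma neg_weights_rem x l : x \in l ->
  neg_weights l = ((x.2 < 0)%R + neg_weights (rem x l))%N.
Proof. by move=> xl; rewrite /neg_weights ((permP (perm_to_rem xl)) _). Qed.

Lemma neg_weights_merge x y l : x \in l -> y \in rem x l ->
  x.2 \is Num.real -> y.2 \is Num.real ->
  (neg_weights ((x.1, (x.2 + y.2)%R) :: rem y (rem x l)) <= neg_weights l)%N.
Proof.
move=> xl yl xr yr; rewrite (neg_weights_rem xl) (neg_weights_rem yl) /= addnA leq_add2r.
have [xy0|] := boolP (x.2 + y.2 < 0); last by [].
have [//|x0] := boolP (x.2 < 0); have [|y0] := boolP (y.2 < 0); first by rewrite addn1.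
rewrite -real_leNgt ?real0 // in x0; rewrite -real_leNgt ?real0 // in y0.
by move: (lt_le_trans xy0 (addr_ge0 x0 y0)); rewrite ltxx.
Qed.

Lemma dup_pole l : ~~ uniq (map fst l) ->
  exists x y, [/\ x \in l, y \in rem x l & y.1 = x.1].
Proof.
elim: l => //= x l IH; rewrite negb_and negbK => /orP[/mapP[y yl yx]|nu].
  by exists x, y; rewrite mem_head eqxx.
have [x' [y [x'l yl e]]] := IH nu.
exists x', y; split => //; first by rewrite inE x'l orbT.
by case: eqP => [_|_] /=; [exact: (mem_rem yl) | rewrite inE yl orbT].
Qed.

(* Distinct poles and nonzero weights: sort the poles. *)
Lemma distinct_poles_pf_split l :
  uniq (map fst l) -> all (fun x => [&& x.1 < 0, x.2 \is Num.real & x.2 != 0]) l ->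
  neg_root_split (pf_num l) (neg_weights l).
Proof.
move=> ul hl; pose leT := fun x y : C * C => x.1 <= y.1.
set ls := sort leT l; have pl : perm_eq ls l by rewrite perm_sort.
have sls : sorted leT ls.
  apply: (sort_sorted_in (P := fun x : C * C => x.1 \is Num.real)).
    by move=> a b ra rb; rewrite /leT real_leVge.
  by apply/allP => x /(allP hl) /andP[h _]; rewrite ltr0_real.
have uls : uniq (map fst ls) by rewrite (perm_uniq (perm_map fst pl)).
have hls : all (fun x => [&& x.1 < 0, x.2 \is Num.real & x.2 != 0]) ls by rewrite (perm_all _ pl).
rewrite -(pf_num_perm pl) /neg_weights -(permP pl).
pose m := size ls; pose p k := (nth 0 ls k).1; pose w k := (nth 0 ls k).2.
have ls_enum : ls = [seq (p i, w i) | i : 'I_m <- enum 'I_m].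
  rewrite -[LHS](mkseq_nth 0) /mkseq -val_enum_ord -map_comp.
  by apply: eq_map => i /=; rewrite /p /w; case: nth.
have hk k : (k < m)%N -> [&& p k < 0, w k \is Num.real & w k != 0].
  by move=> km; apply: (allP hls); rewrite mem_nth.
have -> : count (fun x : C * C => (x.2 < 0)%R) ls = count (fun k => (w k < 0)%R) (iota 0 m).
  by rewrite {1}ls_enum -val_enum_ord !count_map.
rewrite {1}ls_enum; apply: distinct_poles_split => [i j /andP[ij jm]|k|k|k] /=; last 3 first.
- by case/hk/and3P.
- by case/hk/and3P.
- by case/hk/and3P.
have im : (i < m)%N by apply: ltn_trans jm.
have le : p i <= p j.
  by apply: (sorted_ltn_nth (leT := leT)); rewrite ?inE ?ij // => b a c; apply: le_trans.
rewrite lt_neqAle le andbT /p; apply: contraTneq ij => eq_ij.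
have : nth 0 (map fst ls) i == nth 0 (map fst ls) j by rewrite !(nth_map 0) // eq_ij.
by rewrite nth_uniq ?size_map // => /eqP ->; rewrite ltnn.
Qed.

Lemma pf_num_split l : all (fun x => (x.1 < 0) && (x.2 \is Num.real)) l ->
  neg_root_split (pf_num l) (neg_weights l).
Proof.
have [k] := ubnP (size l); elim: k l => // k IH l lt_lk hl.
have reduce (x : C * C) l' : x.1 < 0 -> pf_num l = ('X - x.1%:P) * pf_num l' ->
    (size l' < size l)%N -> all (fun x => (x.1 < 0) && (x.2 \is Num.real)) l' ->
    (neg_weights l' <= neg_weights l)%N -> neg_root_split (pf_num l) (neg_weights l).
  move=> x0 -> ltl' hl' nl'; apply: neg_root_split_mulX x0 nl' (IH _ _ hl').
  by apply: leq_trans ltl' _; rewrite -ltnS.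
have [/hasP[x xl /eqP x20]|nz] := boolP (has (fun x : C * C => x.2 == 0) l).
  have /andP[x1 _] := allP hl x xl.
  apply: (reduce x (rem x l) x1 (pf_num_zero_weight xl x20)).
  - by rewrite size_rem // ltn_predL; case: (l) xl.
  - by apply/allP => y /mem_rem /(allP hl).
  - by rewrite (neg_weights_rem xl) leq_addl.
have [/dup_pole [x [y [xl yl yx]]]|/negPn ul] := boolP (~~ uniq (map fst l)).
  have /andP[x1 xr] := allP hl x xl; have /andP[_ yr] := allP hl y (mem_rem yl).
  apply: (reduce x _ x1 (pf_num_merge xl yl yx)).
  - have ne_xl : (0 < size (rem x l))%N by case: (rem x l) yl.
    by rewrite /= size_rem // prednK // size_rem // ltn_predL; case: (l) xl.
  - rewrite /= x1 rpredD //=; apply/allP => z /mem_rem /mem_rem /(allP hl) //.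
  - exact: neg_weights_merge.
apply: distinct_poles_pf_split => //; apply/allP => x xl.
have /andP[-> ->] := allP hl x xl; apply: contraNneq nz => <-.
by apply/hasP; exists x.
Qed.

End Reduction.

(* The modal form of an SSS system, from the spectral theorem for the real
   symmetric matrix A = Q D P with P = spectralmx A orthogonal. *)
Section ModalForm.
Variables (C : numClosedFieldType) (n : nat) (A : 'M[C]_n) (b : 'cV[C]_n).
Hypothesis sssA : SSS A b.

Let P := spectralmx A.
Let d := spectral_diag A.
Let D := diag_mx d.
Let Q := invmx P.
Let Pu : P \in unitmx := spectral_unit A.
Let QP : Q *m P = 1%:M := mulVmx Pu.
Let PQ : P *m Q = 1%:M := mulmxV Pu.
Let mp m1 m2 (M : 'M[C]_(m1, m2)) := map_mx (@polyC C) M.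

Definition modal_coef : 'cV[C]_n := spectralmx A *m b.

Definition sss_modes : seq (C * C) :=
  [seq (spectral_diag A 0 i, (modal_coef i 0)^* * modal_coef i 0) | i <- enum 'I_n].

Lemma sss_symmetric : A \is symmetricmx.
Proof.
by case: sssA => AT _ _ _; apply/is_hermitianmxP; rewrite expr0 scale1r map_mx_id // AT.
Qed.

Lemma sss_real : A \is a mxOver Num.real.
Proof. by case: sssA. Qed.

Lemma sss_diagonalize : A = Q *m D *m P.
Proof. exact/orthomx_spectralP/symmetric_normalmx/sss_real/sss_symmetric. Qed.

Lemma sss_eigen_real i : d 0 i \is Num.real.
Proof.
have := hermitian_spectral_diag_real (realsym_hermsym sss_symmetric sss_real).
by move=> /mxOverP /(_ 0 i).
Qed.

(* P is real orthogonal, so b^T Q is the conjugate transpose of P b. *)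
Lemma sss_input_modal i : (b^T *m Q) 0 i = (modal_coef i 0)^*.
Proof.
case: sssA => _ _ br _.
rewrite /modal_coef /Q invmx_unitary ?spectral_unitarymx // !mxE rmorph_sum /=.
apply: eq_bigr => k _; rewrite !mxE rmorphM /= mulrC.
by have /mxOverP /(_ k 0) /CrealP -> := br.
Qed.

Let cofactor_diag i := \prod_(j | j != i) ('X - (d 0 j)%:P).
Let E := diag_mx (\row_i cofactor_diag i).
Let cp := \prod_i ('X - (d 0 i)%:P).

Lemma char_poly_mx_diagonalize :
  char_poly_mx A = mp Q *m diag_mx (\row_i ('X - (d 0 i)%:P)) *m mp P.
Proof.
have -> : diag_mx (\row_i ('X - (d 0 i)%:P)) = 'X%:M - mp D.
  apply/matrixP => i j; rewrite !mxE.
  by case: eqP => [->|_] /=; rewrite ?mulr1n ?mulr0n ?subr0.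
rewrite /char_poly_mx {1}sss_diagonalize mulmxBr mulmxBl scalar_mxC.
by rewrite -['X%:M *m mp Q *m mp P]mulmxA /mp -map_mxM QP map_mx1 mulmx1 !map_mxM.
Qed.

Lemma char_poly_diagonalize : char_poly A = cp.
Proof.
rewrite /char_poly char_poly_mx_diagonalize !det_mulmx det_diag mulrC mulrA.
rewrite -det_mulmx /mp -map_mxM PQ map_mx1 det1 mul1r.
by apply: eq_bigr => i _; rewrite mxE.
Qed.

Lemma adj_char_poly_mx : \adj (char_poly_mx A) = mp Q *m E *m mp P.
Proof.
have cp0 : cp != 0 by rewrite -char_poly_diagonalize monic_neq0 ?char_poly_monic.
have mpQP : mp Q *m mp P = 1%:M by rewrite /mp -map_mxM QP map_mx1.
have mpPQ : mp P *m mp Q = 1%:M by rewrite /mp -map_mxM PQ map_mx1.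
have diagE : diag_mx (\row_i ('X - (d 0 i)%:P)) *m E = cp%:M.
  rewrite mulmx_diag -diag_const_mx; congr diag_mx.
  by apply/rowP => i; rewrite !mxE /cp (bigD1 i).
have resolvent : char_poly_mx A *m (mp Q *m E *m mp P) = cp%:M.
  rewrite char_poly_mx_diagonalize !mulmxA -[_ *m mp P *m mp Q]mulmxA mpPQ mulmx1.
  by rewrite -[mp Q *m _ *m E]mulmxA diagE scalar_mxC -mulmxA mpQP mulmx1.
have : cp *: \adj (char_poly_mx A) = cp *: (mp Q *m E *m mp P).
  by rewrite -mul_mx_scalar -resolvent mulmxA mul_adj_mx -char_poly_diagonalize mul_scalar_mx.
move=> /matrixP eq_scaled; apply/matrixP => i j; have := eq_scaled i j; rewrite !mxE.
exact: mulfI.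
Qed.

Lemma numH_modes : numH A b = pf_num sss_modes.
Proof.
rewrite pf_num_enum /numH adj_char_poly_mx !mulmxA map_trmx -map_mxM.
rewrite -[_ *m mp P *m _]mulmxA -map_mxM mul_mx_diag mxE.
apply: eq_bigr => i _; rewrite [X in X * _]mxE [X in X * _ * _]mxE [X in _ * X * _]mxE.
rewrite [X in _ * X]mxE.
by rewrite -/modal_coef sss_input_modal /= -mul_polyC polyCM mulrAC.
Qed.

Lemma char_poly_modes : char_poly A = pf_den sss_modes.
Proof. by rewrite pf_den_enum char_poly_diagonalize. Qed.

Lemma sss_eigen_neg i : d 0 i < 0.
Proof.
case: sssA => _ _ _ stable.
have : root (char_poly A) (d 0 i).
  by rewrite char_poly_diagonalize /root horner_prod (bigD1 i) //= hornerXsubC subrr mul0r.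
by move=> /stable; rewrite (Creal_ReP _ (sss_eigen_real i)).
Qed.

Let U := \matrix_(k < n) ((b^T *m Q) *m D ^+ k).

(* The Krylov matrix of (b^T, A) in the eigenbasis is Vandermonde-like. *)
Lemma krylov_modal : \matrix_(i < n) (b^T *m A ^+ i) = U *m P.
Proof.
have powA k : A ^+ k = Q *m D ^+ k *m P.
  elim: k => [|k IH]; first by rewrite !expr0 mulmx1 QP.
  by rewrite !exprS -!mulmxE IH {1}sss_diagonalize -!mulmxA (mulmxA P) PQ mul1mx !mulmxA.
by apply/row_matrixP => k; rewrite row_mul !rowK powA !mulmxA.
Qed.

Lemma krylov_modal_entry k i : U k i = (modal_coef i 0)^* * (d 0 i) ^+ k.
Proof.
have powD j : D ^+ j = diag_mx (\row_l (d 0 l) ^+ j).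
  elim: j => [|j IH].
    rewrite expr0 -[1]/(1%:M : 'M_n) -diag_const_mx; congr diag_mx.
    by apply/rowP => l; rewrite !mxE.
  rewrite exprS -mulmxE IH /D mulmx_diag; congr diag_mx.
  by apply/rowP => l; rewrite !mxE exprS.
by rewrite /U mxE powD mul_mx_diag mxE [X in _ * X]mxE sss_input_modal.
Qed.

Lemma minimal_modes : minimal_SSS A b ->
  injective (fun i => d 0 i) /\ forall i, modal_coef i 0 != 0.
Proof.
rewrite /minimal_SSS krylov_modal /row_free mxrankMfree ?row_free_unit // -/(row_free U).
rewrite row_free_unit => Uu.
have ker (x : 'cV_n) : U *m x = 0 -> x = 0.
  by move=> Ux; rewrite -(mulKmx Uu x) Ux mulmx0.
have coef_neq0 i : modal_coef i 0 != 0.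
  apply/negP => /eqP v0; have := ker (delta_mx i 0).
  have -> : U *m delta_mx i 0 = 0 :> 'cV[C]_n.
    by rewrite -colE; apply/matrixP => k j; rewrite mxE krylov_modal_entry v0 rmorph0 mul0r mxE.
  move=> /(_ erefl) /(congr1 (fun X : 'cV[C]_n => X i 0)); rewrite !mxE !eqxx /=.
  by move=> /eqP; rewrite oner_eq0.
split => // i j dij; apply/eqP; apply: contraT => nij.
pose u i := (modal_coef i 0)^*.
have := ker (u j *: delta_mx i 0 - u i *: delta_mx j 0).
have -> : U *m (u j *: delta_mx i 0 - u i *: delta_mx j 0) = 0 :> 'cV[C]_n.
  rewrite mulmxBr -!scalemxAr -!colE.
  by apply/matrixP => k l; rewrite [U]lock !mxE; unlock; rewrite !krylov_modal_entry dij /u; ring.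
move=> /(_ erefl) /(congr1 (fun X : 'cV[C]_n => X i 0)); rewrite !mxE !eqxx (negPf nij) /=.
by rewrite mulr1 mulr0 subr0 => /eqP; rewrite conjC_eq0 (negPf (coef_neq0 j)).
Qed.

End ModalForm.

Section ErrorSystem.
Variables (C : numClosedFieldType) (n r : nat).
Variables (A : 'M[C]_n) (b : 'cV[C]_n) (lam bb : 'I_r -> C).
Hypothesis sssA : SSS A b.
Hypothesis zip : ZIP lam bb.

Definition zip_modes : seq (C * C) := [seq (lam i, - bb i) | i <- enum 'I_r].
Let modes := sss_modes A b ++ zip_modes.

Lemma err_num_modes : err_num A b lam bb = pf_num modes.
Proof.
have numHr_modes : numHr lam bb = - pf_num zip_modes.
  by rewrite pf_num_enum /numHr -sumrN; apply: eq_bigr => i _; rewrite /= scaleNr opprK.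
have denHr_modes : denHr lam = pf_den zip_modes by rewrite pf_den_enum.
rewrite /err_num numHr_modes denHr_modes (numH_modes sssA) (char_poly_modes sssA).
by rewrite pf_num_cat mulNr opprK [pf_num zip_modes * _]mulrC.
Qed.

Lemma error_modes_real : all (fun x => (x.1 < 0) && (x.2 \is Num.real)) modes.
Proof.
case: zip => _ lam_neg bb_pos; rewrite all_cat; apply/andP; split.
  apply/allP => _ /mapP[i _ ->] /=.
  by rewrite (sss_eigen_neg sssA) /= ger0_real // mulrC mul_conjC_ge0.
by apply/allP => _ /mapP[i _ ->]; rewrite /= lam_neg rpredN gtr0_real.
Qed.

(* Only the r weights of -H_r can be negative. *)
Lemma error_neg_weights : (neg_weights modes <= r)%N.
Proof.
rewrite /neg_weights count_cat (eq_in_count (a2 := pred0)) ?count_pred0 ?add0n.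
  by apply: leq_trans (count_size _ _) _; rewrite size_map size_enum_ord.
by move=> _ /mapP[i _ ->] /=; apply: le_gtF; rewrite mulrC mul_conjC_ge0.
Qed.

(* An eigenvalue that is not a pole of H_r is a simple pole of H - H_r. *)
Lemma err_num_neq0 : minimal_SSS A b -> (r < n)%N -> err_num A b lam bb != 0.
Proof.
move=> hmin rn; have [d_inj coef_neq0] := minimal_modes sssA hmin.
set d := spectral_diag A.
have [i not_lam] : exists i, d 0 i \notin [seq lam j | j <- enum 'I_r].
  apply/existsP; rewrite -negb_forall; apply: contraL rn => /forallP lam_d.
  have : (size [seq d 0%R i | i <- enum 'I_n] <= size [seq lam j | j <- enum 'I_r])%N.
    apply: uniq_leq_size; first by rewrite (map_inj_uniq d_inj) enum_uniq.
    by move=> _ /mapP[i _ ->]; apply: lam_d.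
  by rewrite !size_map -!enumT !size_enum_ord -leqNgt.
pose x := (d 0 i, (modal_coef A b i 0)^* * modal_coef A b i 0).
rewrite err_num_modes; apply: (@pf_num_simple_pole_neq0 _ _ x).
- by rewrite mem_cat; apply/orP; left; apply/mapP; exists i; rewrite ?mem_enum.
- by rewrite /= mulf_neq0 ?conjC_eq0 ?coef_neq0.
rewrite count_cat !count_map (eq_count (a2 := pred1 i)) => [|j /=]; last first.
  by apply/eqP/eqP => [/d_inj|->].
rewrite -!enumT count_uniq_mem ?enum_uniq // mem_enum (eq_count (a2 := pred0)) ?count_pred0 //.
by move=> j /=; apply: contraNF not_lam => /eqP <-; apply/mapP; exists j; rewrite ?mem_enum.
Qed.

End ErrorSystem.

(* The interpolation points are positive, so they are among the roots of the
   cofactor R of the splitting of err_num, which has degree at most 2r. *)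
Theorem lemma2 (C : numClosedFieldType) (n r : nat)
    (A : 'M[C]_n) (b : 'cV[C]_n) (lam bb : 'I_r -> C) (s : 'I_(2 * r) -> C) :
  SSS A b -> minimal_SSS A b ->
  ZIP lam bb -> (r < n)%N ->
  (forall k, 0 < s k) ->
  (\prod_(k < 2 * r) ('X - (s k)%:P)) %| err_num A b lam bb ->
  exists Q : {poly C},
    err_num A b lam bb = (\prod_(k < 2 * r) ('X - (s k)%:P)) * Q /\
    (forall z : C, root Q z -> z < 0).
Proof.
move=> sssA hmin zip rn s_pos interp.
have split_err := pf_num_split (error_modes_real sssA zip).
rewrite -err_num_modes // in split_err.
apply: (neg_root_split_quotient split_err (err_num_neq0 lam bb sssA hmin rn) interp).
- have -> : size (\prod_(k < 2 * r) ('X - (s k)%:P)) = (2 * r).+1.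
    by rewrite size_prod_XsubC -[X in _ = X.+1](card_ord (2 * r)) cardT enumT.
  by rewrite addn1 ltnS leq_mul2l error_neg_weights orbT.
- move=> z; rewrite /root horner_prod prodf_seq_eq0 => /hasP[k _].
  by rewrite hornerXsubC subr_eq0 => /eqP ->; rewrite ltW.
Qed.
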